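(* Let $f:\mathbb{R}_{++}\to\mathbb{R}$ be operator convex, i.e. for all $n\in\mathbb{N}$, all positive definite Hermitian $X,Y\in\mathbb{H}^n_{++}$ and all $\lambda\in[0,1]$, $f(\lambda X+(1-\lambda)Y)\preceq\lambda f(X)+(1-\lambda)f(Y)$. Then for any positive semidefinite $A\in\mathbb{H}^n$, the function $g(X)=\operatorname{tr}[Af(X)]$ is $\lambda_{\max}(A)$-smooth and $\lambda_{\min}(A)$-strongly convex relative to $X\mapsto\operatorname{tr}[f(X)]$ on $\mathbb{H}^n_{++}$.
   Context: For Hermitian $X=\sum_i\lambda_iv_iv_i^\dagger$, $f(X)=\sum_if(\lambda_i)v_iv_i^\dagger$. $\preceq$ is the semidefinite (Loewner) order; $\lambda_{\max},\lambda_{\min}$ are largest/smallest eigenvalues. A function $g$ is $L$-smooth relative to $\varphi$ on a set $\mathcal{C}$ if $L\varphi-g$ is convex on the relative interior of $\mathcal{C}$, and $\mu$-strongly convex relative to $\varphi$ if $g-\mu\varphi$ is convex there. *)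

From HB Require Import structures.
From mathcomp Require Import all_boot all_order all_algebra.
From mathcomp Require Import sesquilinear spectral.
From mathcomp Require Import reals.
From mathcomp.real_closed Require Import complex.
Set Implicit Arguments. Unset Strict Implicit. Unset Printing Implicit Defensive.
Import Order.TTheory GRing.Theory Num.Theory Num.Def.
Local Open Scope ring_scope.
Local Open Scope complex_scope.

Definition ctr (R : realType) m n (M : 'M[R[i]]_(m, n)) : 'M[R[i]]_(n, m) :=
  map_mx conjC (M^T).

Definition hermitian (R : realType) n (X : 'M[R[i]]_n) : Prop :=
  X \is hermsymmx.

Definition psdmx (R : realType) n (X : 'M[R[i]]_n) : Prop :=
  hermitian X /\ forall v : 'rV[R[i]]_n, 0 <= (v *m X *m ctr v) 0 0.

Definition pdmx (R : realType) n (X : 'M[R[i]]_n) : Prop :=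
  hermitian X /\ forall v : 'rV[R[i]]_n, v != 0 -> 0 < (v *m X *m ctr v) 0 0.

Definition loewner_le (R : realType) n (X Y : 'M[R[i]]_n) : Prop :=
  psdmx (Y - X).

(* Real eigenvalues of a Hermitian matrix, read off a spectral decomposition
   X = P^{-1} diag(d) P with P unitary (spectral.v). *)
Definition eigval (R : realType) n (X : 'M[R[i]]_n) (j : 'I_n) : R :=
  complex.Re (spectral_diag X 0 j).

Definition mxfun (R : realType) (f : R -> R) n (X : 'M[R[i]]_n) : 'M[R[i]]_n :=
  invmx (spectralmx X) *m
    diag_mx (\row_j (f (eigval X j))%:C) *m spectralmx X.

Definition lambda_max (R : realType) n (X : 'M[R[i]]_n.+1) : R :=
  \big[Num.max/eigval X ord0]_(j < n.+1) eigval X j.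

Definition lambda_min (R : realType) n (X : 'M[R[i]]_n.+1) : R :=
  \big[Num.min/eigval X ord0]_(j < n.+1) eigval X j.

Definition operator_convex (R : realType) (f : R -> R) : Prop :=
  forall (m : nat) (X Y : 'M[R[i]]_m), pdmx X -> pdmx Y ->
  forall t : R, 0 <= t <= 1 ->
    loewner_le (mxfun f (t%:C *: X + (1 - t)%:C *: Y))
               (t%:C *: mxfun f X + (1 - t)%:C *: mxfun f Y).

Definition convex_on_pd (R : realType) n (h : 'M[R[i]]_n -> R) : Prop :=
  forall X Y : 'M[R[i]]_n, pdmx X -> pdmx Y ->
  forall t : R, 0 <= t <= 1 ->
    h (t%:C *: X + (1 - t)%:C *: Y) <= t * h X + (1 - t) * h Y.

Definition rel_smooth_pd (R : realType) n (L : R) (g phi : 'M[R[i]]_n -> R) :=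
  convex_on_pd (fun X => L * phi X - g X).

Definition rel_strongly_convex_pd (R : realType) n (mu : R)
  (g phi : 'M[R[i]]_n -> R) :=
  convex_on_pd (fun X => g X - mu * phi X).

(* real trace (the traces below are real numbers) *)
Definition retr (R : realType) n (M : 'M[R[i]]_n) : R := complex.Re (\tr M).

From HB Require Import structures.
From mathcomp Require Import all_boot all_order all_algebra.
From mathcomp Require Import sesquilinear spectral.
From mathcomp Require Import reals.
From mathcomp.real_closed Require Import complex.
Import Order.TTheory GRing.Theory Num.Theory.
Local Open Scope ring_scope.
Local Open Scope complex_scope.

(* Pairing the operator-convexity inequality with a matrix B such that
   tr(B M) >= 0 for every positive semidefinite M shows that X |-> tr(B f(X))
   is convex.  Now L tr f(X) - tr(A f(X)) = tr((L I - A) f(X)) and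
   tr(A f(X)) - mu tr f(X) = tr((A - mu I) f(X)), and in an eigenbasis of A
   both L I - A (for L = lambda_max A) and A - mu I (for mu = lambda_min A) are
   diagonal with nonnegative entries, so they have this property. *)

Section RealTrace.
Variables (R : realType) (n : nat).
Implicit Types (M N : 'M[R[i]]_n) (a : R).

Lemma retrD M N : retr (M + N) = retr M + retr N.
Proof. by rewrite /retr mxtraceD raddfD. Qed.

Lemma retrB M N : retr (M - N) = retr M - retr N.
Proof. by rewrite /retr raddfB raddfB. Qed.

Lemma retrZ a M : retr (a%:C *: M) = a * retr M.
Proof.
by rewrite /retr mxtraceZ; case: (\tr M) => x y /=; rewrite mul0r subr0.
Qed.

Lemma retr_ge0 M : 0 <= \tr M -> 0 <= retr M.
Proof. by rewrite lecE => /andP[]. Qed.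

End RealTrace.

Lemma complex_Re_real (R : realType) (x : R[i]) :
  x \is Num.real -> (complex.Re x)%:C = x.
Proof.
by case: x => a b; rewrite realE !lecE /= => /orP[] /andP[/eqP + _] => [-> | <-].
Qed.

Section ConjDiag.
Variables (R : realType) (n : nat).

Lemma mulmx_ctr_diag_entry (U M : 'M[R[i]]_n) j :
  (U *m M *m ctr U) j j = (row j U *m M *m ctr (row j U)) 0 0.
Proof.
rewrite !mxE; apply: eq_bigr => k _; rewrite !mxE; congr (_ * _).
by apply: eq_bigr => l _; rewrite !mxE.
Qed.

Lemma mxtrace_conj_diag_mul_ge0 (U M : 'M[R[i]]_n) (d : 'rV[R[i]]_n) :
  (forall j, 0 <= d 0 j) -> psdmx M ->
  0 <= \tr (ctr U *m diag_mx d *m U *m M).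
Proof.
move=> d_ge0 [_ M_psd].
rewrite -!mulmxA mxtrace_mulC -!mulmxA mul_diag_mx /mxtrace.
apply: sumr_ge0 => j _; rewrite mxE mulr_ge0 //.
by rewrite mulmxA mulmx_ctr_diag_entry.
Qed.

End ConjDiag.

Section HermitianSpectrum.
Variables (R : realType) (n : nat) (A : 'M[R[i]]_n).
Hypothesis hermA : A \is hermsymmx.

Lemma ctr_spectralmxK : ctr (spectralmx A) *m spectralmx A = 1%:M.
Proof.
by have := mulVmx (spectral_unit A); rewrite invmx_unitary ?spectral_unitarymx.
Qed.

Lemma hermitian_spectral_decomp :
  A = ctr (spectralmx A) *m diag_mx (\row_j (eigval A j)%:C) *m spectralmx A.
Proof.
have /orthomx_spectralP {1}-> := hermitian_normalmx hermA.
rewrite invmx_unitary ?spectral_unitarymx //; congr (_ *m diag_mx _ *m _).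
apply/matrixP => i j; rewrite ord1 mxE /eigval complex_Re_real //.
exact: (mxOverP (hermitian_spectral_diag_real hermA)).
Qed.

Lemma affine_spectral_decomp (a b : R) :
  a%:C%:M + b%:C *: A =
  ctr (spectralmx A) *m diag_mx (\row_j (a + b * eigval A j)%:C) *m spectralmx A.
Proof.
have -> : \row_j (a + b * eigval A j)%:C =
          const_mx a%:C + b%:C *: \row_j (eigval A j)%:C.
  by apply/matrixP => i j; rewrite !mxE rmorphD rmorphM.
rewrite linearD linearZ /= diag_const_mx mulmxDr mulmxDl -scalemxAr -scalemxAl.
rewrite -hermitian_spectral_decomp mul_mx_scalar -scalemxAl ctr_spectralmxK.
by rewrite scalemx1.
Qed.

Lemma retr_affine_mul_ge0 (a b : R) (M : 'M[R[i]]_n) :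
  (forall j, 0 <= a + b * eigval A j) -> psdmx M ->
  0 <= retr ((a%:C%:M + b%:C *: A) *m M).
Proof.
move=> eig_ge0 M_psd; rewrite affine_spectral_decomp.
by apply/retr_ge0/mxtrace_conj_diag_mul_ge0 => // j; rewrite mxE ler0c.
Qed.

End HermitianSpectrum.

Section TraceConvexity.
Variables (R : realType) (n : nat).

Lemma eq_convex_on_pd (h1 h2 : 'M[R[i]]_n -> R) :
  h1 =1 h2 -> convex_on_pd h1 -> convex_on_pd h2.
Proof. by move=> eq_h h1_cvx X Y pdX pdY t t01; rewrite -!eq_h; exact: h1_cvx. Qed.

Lemma retr_affine_mul (a b : R) (A M : 'M[R[i]]_n) :
  retr ((a%:C%:M + b%:C *: A) *m M) = a * retr M + b * retr (A *m M).
Proof. by rewrite mulmxDl retrD mul_scalar_mx -scalemxAl !retrZ. Qed.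

Lemma convex_retr_mxfun (f : R -> R) (B : 'M[R[i]]_n) :
  operator_convex f -> (forall M, psdmx M -> 0 <= retr (B *m M)) ->
  convex_on_pd (fun X => retr (B *m mxfun f X)).
Proof.
move=> f_cvx B_ge0 X Y pdX pdY t t01.
move: (f_cvx _ _ _ pdX pdY t t01) => /B_ge0.
(* Abstracting the values of mxfun keeps rewriting from unfolding it. *)
move: (mxfun f X) (mxfun f Y) (mxfun f _) => P Q Z.
by rewrite mulmxBr mulmxDr -!scalemxAr retrB retrD !retrZ subr_ge0.
Qed.

End TraceConvexity.

Theorem mainTheorem9 (R : realType) (f : R -> R) (hf : operator_convex f)
  (n : nat) (A : 'M[R[i]]_n.+1) (hA : psdmx A) :
  rel_smooth_pd (lambda_max A) (fun X => retr (A *m mxfun f X))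
                (fun X => retr (mxfun f X)) /\
  rel_strongly_convex_pd (lambda_min A) (fun X => retr (A *m mxfun f X))
                (fun X => retr (mxfun f X)).
Proof.
have [hermA _] := hA.
split.
- apply: (@eq_convex_on_pd _ _
    (fun X => retr (((lambda_max A)%:C%:M + (-1)%:C *: A) *m mxfun f X))).
    by move=> X; rewrite retr_affine_mul mulN1r.
  apply: convex_retr_mxfun => // M; apply: retr_affine_mul_ge0 => // j.
  by rewrite mulN1r subr_ge0; exact: le_bigmax.
- apply: (@eq_convex_on_pd _ _
    (fun X => retr (((- lambda_min A)%:C%:M + 1%:C *: A) *m mxfun f X))).
    by move=> X; rewrite retr_affine_mul mul1r mulNr addrC.
  apply: convex_retr_mxfun => // M; apply: retr_affine_mul_ge0 => // j.
  by rewrite mul1r addrC subr_ge0; exact: bigmin_le.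
Qed.
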